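(* Let $X=\{a_1,\dots,a_\ell\}$ be a finite set of $\ell$ distinct points and $N\ge2$. A probability measure $\gamma$ on $X^N$ is a symmetrized Monge state, i.e. $\gamma=S\big(\sum_{\nu=1}^\ell\frac1\ell\delta_{T_1(a_\nu)}\otimes\cdots\otimes\delta_{T_N(a_\nu)}\big)$ for some bijections $T_1,\dots,T_N:X\to X$, if and only if it is an SAE state with uniform marginal $\bar\lambda$ whose site weights all equal $1/\ell$, i.e. $\gamma=\sum_{\nu=1}^\ell\frac1\ell S(\delta_{T_1(a_\nu)}\otimes\cdots\otimes\delta_{T_N(a_\nu)})$ for some (not necessarily bijective) maps $T_1,\dots,T_N:X\to X$ satisfying $\sum_{\nu=1}^\ell\frac1\ell\lambda^{(\nu)}=\bar\lambda$, where $\lambda^{(\nu)}=\frac1N\sum_{k=1}^N\delta_{T_k(a_\nu)}$.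
   Context: $\bar\lambda=\sum_{i=1}^\ell\frac1\ell\delta_{a_i}$ is the uniform probability measure on $X$. The symmetrization operator is $(S\gamma)(A_1\times\cdots\times A_N)=\frac1{N!}\sum_{\sigma\in S_N}\gamma(A_{\sigma(1)}\times\cdots\times A_{\sigma(N)})$. An SAE state with marginal $\lambda_*$ is a probability measure of the form $\sum_{\nu=1}^\ell\alpha^{(\nu)}S(\delta_{T_1(a_\nu)}\otimes\cdots\otimes\delta_{T_N(a_\nu)})$ with maps $T_k:X\to X$ and site weights $\alpha^{(\nu)}\ge0$ such that $\sum_\nu\alpha^{(\nu)}\lambda^{(\nu)}=\lambda_*$, with $\lambda^{(\nu)}$ as in the claim. *)

(* Discrete measures on the finite set X^N are represented by
   their point masses: functions {ffun 'I_N -> X} -> R. *)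
From HB Require Import structures.
From mathcomp Require Import all_boot all_order all_algebra all_fingroup.
From mathcomp Require Import reals.
Set Implicit Arguments. Unset Strict Implicit. Unset Printing Implicit Defensive.
Import Order.TTheory GRing.Theory Num.Theory.
Local Open Scope ring_scope.

Section Defs.
Variables (R : realType) (X : finType) (N : nat).

Definition pmeasure := {ffun 'I_N -> X} -> R.

Definition is_probability (g : pmeasure) : Prop :=
  (forall y, 0 <= g y) /\ \sum_y g y = 1.

Definition dirac_tensor (x : {ffun 'I_N -> X}) : pmeasure :=
  fun y => (y == x)%:R.

(* symmetrization S: (S g)(A_1 x...x A_N) = 1/N! sum_sigma g(A_sigma(1) x ... x A_sigma(N)),
   evaluated on singletons {y}. *)
Definition symmetrize (g : pmeasure) : pmeasure :=
  fun y => (N`!%:R)^-1 * \sum_(s : 'S_N) g [ffun i => y (s i)].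

Definition lambda_bar : X -> R := fun _ => (#|X|%:R)^-1.

Definition site_marginal (T : 'I_N -> X -> X) (nu : X) : X -> R :=
  fun x => (N%:R)^-1 * \sum_(k < N) (T k nu == x)%:R.

Definition sym_Monge_state (g : pmeasure) : Prop :=
  exists T : 'I_N -> X -> X, (forall k, bijective (T k)) /\
    forall y, g y = symmetrize
      (fun z => \sum_(nu : X) (#|X|%:R)^-1 * dirac_tensor [ffun k => T k nu] z) y.

Definition SAE_state_weights (lam : X -> R) (alpha : X -> R) (g : pmeasure) : Prop :=
  exists T : 'I_N -> X -> X,
    (forall x, \sum_(nu : X) alpha nu * site_marginal T nu x = lam x) /\
    forall y, g y = \sum_(nu : X) alpha nu * symmetrize (dirac_tensor [ffun k => T k nu]) y.

End Defs.

(* The marginal condition says that the bipartite multigraph on two copies of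
   X, with one edge from nu to T_k(nu) for every site nu and every k, is
   N-regular.  By Hall's marriage theorem a regular bipartite multigraph has a
   perfect matching; deleting it leaves an (N-1)-regular multigraph, so the
   edges split into N perfect matchings, i.e. bijections B_k such that the
   multisets {T_k(nu)} and {B_k(nu)} agree for every site nu.  Symmetrization
   only sees these multisets, so both families give the same state.
   Conversely, bijections make every point occur exactly N times, which is the
   uniform marginal. *)

From mathcomp Require Import all_boot all_order all_algebra all_fingroup.
From mathcomp Require Import reals zify.
Set Implicit Arguments. Unset Strict Implicit. Unset Printing Implicit Defensive.

Section HallMarriage.
Variables (I V : finType).
Implicit Types (A : I -> {set V}) (D S T : {set I}).

Definition hall_condition A D :=
  forall S, S \subset D -> #|S| <= #|\bigcup_(i in S) A i|.

Definition matching_on A D (f : I -> V) :=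
  {in D, forall i, f i \in A i} /\ {in D &, injective f}.

Lemma bigcup_setD A T (B : {set V}) :
  \bigcup_(i in T) (A i :\: B) = (\bigcup_(i in T) A i) :\: B.
Proof.
apply/setP => v; rewrite inE; apply/bigcupP/andP => [[i iT]|[vB /bigcupP[i iT vA]]].
  by rewrite inE => /andP[vB vA]; split=> //; apply/bigcupP; exists i.
by exists i; rewrite // inE vB.
Qed.

Lemma leq_card_setD (U B : {set V}) : #|U| <= #|U :\: B| + #|B|.
Proof.
rewrite cardsD; have := subset_leq_card (subsetIl U B).
have := subset_leq_card (subsetIr U B); lia.
Qed.

Lemma matching_on_glue A D S (B : {set V}) f1 f2 :
  matching_on A S f1 -> {in S, forall i, f1 i \in B} ->
  matching_on (fun i => A i :\: B) (D :\: S) f2 ->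
  matching_on A D (fun i => if i \in S then f1 i else f2 i).
Proof.
move=> [f1A f1_inj] f1B [f2A f2_inj].
have f2AB i : i \in D -> i \notin S -> f2 i \in A i :\: B.
  by move=> iD iS; apply: f2A; rewrite inE iS.
split=> [i iD | i j iD jD] /=.
  by case: ifPn => iS; [apply: f1A | have /setDP[] := f2AB i iD iS].
case: ifPn => iS; case: ifPn => jS; first exact: f1_inj.
- by move=> ej; have /setDP[_] := f2AB j jD jS; rewrite -ej f1B.
- by move=> ei; have /setDP[_] := f2AB i iD iS; rewrite ei f1B.
- by apply: f2_inj; rewrite inE ?iS ?jS.
Qed.

Lemma hall_condition_tight A D S :
  hall_condition A D -> S \subset D -> #|\bigcup_(i in S) A i| <= #|S| ->
  hall_condition (fun i => A i :\: \bigcup_(j in S) A j) (D :\: S).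
Proof.
move=> hallD sSD tightS T sTDS; rewrite bigcup_setD.
move: sTDS; rewrite subsetD => /andP[sTD /disjoint_setI0 disjTS].
have := hallD (T :|: S); rewrite subUset sTD sSD bigcup_setU => /(_ isT).
have := cardsUI T S; rewrite disjTS cards0.
have := leq_card_setD (\bigcup_(i in T) A i :|: \bigcup_(i in S) A i) (\bigcup_(i in S) A i).
rewrite setDUl setDv setU0; lia.
Qed.

Lemma hall_condition_surplus A D i0 v :
  i0 \in D -> (forall S, S \proper D -> S != set0 -> #|S| < #|\bigcup_(i in S) A i|) ->
  hall_condition (fun i => A i :\: [set v]) (D :\: [set i0]).
Proof.
move=> i0D surplus T sTD; rewrite bigcup_setD.
have [-> | nT0] := eqVneq T set0; first by rewrite cards0.
have pTD : T \proper D.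
  rewrite properEneq (subset_trans sTD (subsetDl _ _)) andbT.
  by apply: contraTneq i0D => <-; apply/negP => /(subsetP sTD); rewrite !inE eqxx.
have := surplus T pTD nT0; have := leq_card_setD (\bigcup_(i in T) A i) [set v].
rewrite cards1; lia.
Qed.

Theorem hall_marriage (v0 : V) A D :
  hall_condition A D -> exists f, matching_on A D f.
Proof.
have [n] := ubnP #|D|; elim: n D A => // n IH D A /ltnSE cardD hallD.
have [-> | [i0 i0D]] := set_0Vmem D.
  by exists (fun=> v0); split=> i; rewrite inE.
have [/existsP[S /and3P[pSD nS0 tightS]] | /existsPn noTight] :=
  boolP [exists S : {set I}, [&& S \proper D, S != set0 & #|\bigcup_(i in S) A i| <= #|S|]].
- have sSD := proper_sub pSD.
  have [f1 match1] : exists f, matching_on A S f.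
    apply: IH (leq_trans (proper_card pSD) cardD) _.
    by move=> T sTS; apply: hallD (subset_trans sTS sSD).
  have [f2 match2] : exists f, matching_on
      (fun i => A i :\: \bigcup_(j in S) A j) (D :\: S) f.
    apply: IH (hall_condition_tight hallD sSD tightS).
    rewrite cardsDS //; have := subset_leq_card sSD; have := card_gt0 S; rewrite nS0; lia.
  have f1S : {in S, forall i, f1 i \in \bigcup_(j in S) A j}.
    by move=> i iS; apply/bigcupP; exists i => //; apply: match1.1.
  by exists (fun i => if i \in S then f1 i else f2 i); apply: matching_on_glue match2.
- have /card_gt0P[v vA] : 0 < #|A i0|.
    by have := hallD [set i0]; rewrite sub1set i0D cards1 big_set1; apply.
  have [f2 match2] : exists f, matching_on (fun i => A i :\: [set v]) (D :\: [set i0]) f.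
    apply: IH; first by have := proper_card (properD1 i0D); lia.
    apply: hall_condition_surplus i0D _ => S pSD nS0.
    by have := noTight S; rewrite pSD nS0 /= -ltnNge.
  have match1 : matching_on A [set i0] (fun=> v).
    by split=> [i | i j]; rewrite !inE => /eqP-> // /eqP->.
  exists (fun i => if i \in [set i0] then v else f2 i).
  by apply: matching_on_glue match1 _ match2 => i _; rewrite inE.
Qed.

End HallMarriage.

Lemma sum_inj_eq1 (X : finType) (f : X -> X) (x : X) :
  injective f -> \sum_nu (f nu == x) = 1.
Proof.
move=> /injF_bij[h fK hK].
rewrite (bigD1 (h x)) //= hK eqxx big1 ?addn0 // => nu.
by rewrite (can2_eq fK hK) => /negbTE->.
Qed.

Lemma size_sum_count_mem (X : finType) (B : {set X}) (s : seq X) :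
  {subset s <= B} -> size s = \sum_(x in B) count_mem x s.
Proof.
elim: s => [|y s IH] sB /=; first by rewrite big1.
rewrite big_split /= -IH => [|z zs]; last by apply: sB; rewrite inE zs orbT.
rewrite (bigD1 y) /= ?eqxx; last by apply: sB; rewrite inE eqxx.
by rewrite big1 // => x /andP[_ /negbTE]; rewrite eq_sym => ->.
Qed.

(* [r nu] lists the neighbours of [nu], with multiplicity, in an [n]-regular
   bipartite multigraph on [X + X]. *)
Section RegularMultigraph.
Variables (X : finType) (x0 : X).
Implicit Type r : X -> seq X.

Lemma regular_perfect_matching n r : 0 < n ->
  (forall nu, size (r nu) = n) -> (forall x, \sum_nu count_mem x (r nu) = n) ->
  exists2 f : X -> X, injective f & forall nu, f nu \in r nu.
Proof.
move=> n_gt0 size_r count_r; pose A nu := [set x | x \in r nu].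
have [|f [fA f_inj]] := @hall_marriage X X x0 A [set: X].
  move=> S _; rewrite -(leq_pmul2r n_gt0).
  have -> : #|S| * n = \sum_(nu in S) \sum_(x in \bigcup_(i in S) A i) count_mem x (r nu).
    rewrite -sum_nat_const; apply: eq_bigr => nu nuS; rewrite -(size_r nu).
    by apply: size_sum_count_mem => x xr; apply/bigcupP; exists nu; rewrite ?inE.
  rewrite -sum_nat_const exchange_big /= leq_sum // => x _.
  by rewrite -(count_r x) [leqRHS](bigID (mem S)) leq_addr.
exists f => [nu nu' | nu]; first by apply: f_inj; rewrite inE.
by have := fA nu; rewrite !inE => ->.
Qed.

Lemma regular_multigraph_decomposition n r :
  (forall nu, size (r nu) = n) -> (forall x, \sum_nu count_mem x (r nu) = n) ->
  exists T : nat -> X -> X,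
    (forall k, injective (T k)) /\ forall nu, perm_eq (r nu) (mkseq (T^~ nu) n).
Proof.
elim: n r => [|n IH] r size_r count_r.
  by exists (fun=> id); split=> [k x y // | nu]; rewrite (size0nil (size_r nu)).
have [f f_inj fr] := regular_perfect_matching (ltn0Sn n) size_r count_r.
have [|x|T [T_inj T_perm]] := IH (fun nu => rem (f nu) (r nu)).
- by move=> nu; rewrite size_rem ?size_r.
- apply/eqP; rewrite -(eqn_add2l 1) -{1}(sum_inj_eq1 x f_inj) -big_split /= add1n.
  rewrite -(count_r x); apply/eqP/eq_bigr => nu _.
  by rewrite (seq.permP (perm_to_rem (fr nu))).
exists (fun k => if k is k'.+1 then T k' else f).
split=> [[|k] | nu]; [exact: f_inj | exact: T_inj |].
apply: perm_trans (perm_to_rem (fr nu)) _.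
by rewrite /mkseq /= perm_cons (iotaDl 1 0) -map_comp; apply: T_perm.
Qed.

End RegularMultigraph.

Lemma perm_eq_codom_ord (T : eqType) n (f f' : 'I_n -> T) :
  perm_eq (codom f) (codom f') -> exists s : 'S_n, forall i, f i = f' (s i).
Proof.
move=> ff'; have /tuple_permP[s codom_f] : perm_eq (codom f) [tuple f' i | i < n] by [].
exists s => i; rewrite codomE in codom_f.
have := congr1 (nth (f i) ^~ i) codom_f.
by rewrite !(nth_map i) -?enumT ?size_enum_ord // nth_ord_enum tnth_mktuple.
Qed.

Lemma codom_ord_mkseq (T : Type) n (F : nat -> T) :
  codom (fun i : 'I_n => F i) = mkseq F n.
Proof. by rewrite codomE /mkseq -val_enum_ord -map_comp. Qed.

Lemma count_mem_codom (T : finType) (U : eqType) (f : T -> U) x :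
  count_mem x (codom f) = (\sum_t (f t == x))%N.
Proof. by rewrite codomE count_map -sum1_count big_mkcond big_enum. Qed.

Lemma sum_count_codom_inj (X : finType) n (T : 'I_n -> X -> X) :
  (forall k, injective (T k)) -> forall x, \sum_nu count_mem x (codom (T^~ nu)) = n.
Proof.
move=> T_inj x; under eq_bigr do rewrite count_mem_codom.
rewrite exchange_big /= (eq_bigr (fun=> 1)) => [|k _]; last exact: sum_inj_eq1.
by rewrite sum_nat_const card_ord muln1.
Qed.

Import GRing.Theory Num.Theory.
Local Open Scope ring_scope.

Section Symmetrization.
Variables (R : realType) (X : finType) (N : nat).

Lemma symmetrize_sum (I : finType) (c : I -> R) (h : I -> pmeasure R X N) y :
  symmetrize (fun z => \sum_i c i * h i z) y = \sum_i c i * symmetrize (h i) y.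
Proof.
rewrite /symmetrize exchange_big mulr_sumr; apply: eq_bigr => i _.
by rewrite !mulr_sumr; apply: eq_bigr => s _; rewrite mulrCA.
Qed.

Lemma symmetrize_dirac_perm (s : 'S_N) (x : {ffun 'I_N -> X}) y :
  symmetrize (dirac_tensor R [ffun i => x (s i)]) y = symmetrize (dirac_tensor R x) y.
Proof.
rewrite /symmetrize (reindex_inj (mulgI s)); congr (_ * _); apply: eq_bigr => t _.
rewrite /dirac_tensor; congr (_%:R); congr (nat_of_bool _).
apply/eqP/eqP => /ffunP e; apply/ffunP => i.
- by have := e (s^-1 i)%g; rewrite !ffunE permM permKV.
- by rewrite !ffunE permM -e ffunE.
Qed.

Lemma symmetrize_dirac_perm_eq (f f' : 'I_N -> X) y :
  perm_eq (codom f) (codom f') ->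
  symmetrize (dirac_tensor R [ffun i => f i]) y = symmetrize (dirac_tensor R [ffun i => f' i]) y.
Proof.
case/perm_eq_codom_ord => s ff'.
have -> : [ffun i => f i] = [ffun i => [ffun i => f' i] (s i)].
  by apply/ffunP => i; rewrite !ffunE.
exact: symmetrize_dirac_perm.
Qed.

Lemma sum_site_marginal (T : 'I_N -> X -> X) x :
  \sum_nu site_marginal R T nu x = N%:R^-1 * (\sum_nu count_mem x (codom (T^~ nu)))%:R.
Proof.
rewrite -mulr_sumr natr_sum; congr (_ * _); apply: eq_bigr => nu _.
by rewrite count_mem_codom natr_sum.
Qed.

Lemma uniform_site_marginal (T : 'I_N -> X -> X) : (0 < N)%N ->
  (forall x, \sum_nu #|X|%:R^-1 * site_marginal R T nu x = lambda_bar R x) <->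
  (forall x, \sum_nu count_mem x (codom (T^~ nu)) = N)%N.
Proof.
move=> N_gt0; have N_neq0 : N%:R != 0 :> R by rewrite pnatr_eq0 -lt0n.
suff marginal_x x : (\sum_nu #|X|%:R^-1 * site_marginal R T nu x = lambda_bar R x) <->
    (\sum_nu count_mem x (codom (T^~ nu)) = N)%N.
  by split=> marginal x; apply/marginal_x.
have X_neq0 : #|X|%:R != 0 :> R by rewrite pnatr_eq0 -lt0n; apply/card_gt0P; exists x.
rewrite /lambda_bar -mulr_sumr sum_site_marginal -[RHS]mulr1.
split=> [/(mulfI (invr_neq0 X_neq0)) | ->]; last by rewrite mulVf.
by move/(canRL (mulVKf N_neq0)); rewrite mulr1 => /eqP; rewrite eqr_nat => /eqP.
Qed.

End Symmetrization.

Theorem theorem6p1 (R : realType) (X : finType) (N : nat) (hN : (2 <= N)%N)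
  (g : pmeasure R X N) (hg : is_probability g) :
  sym_Monge_state g <->
  SAE_state_weights (@lambda_bar R X) (fun _ : X => (#|X|%:R)^-1 : R) g.
Proof.
have N_gt0 : (0 < N)%N by apply: ltnW.
split=> [[T [T_bij gE]] | [T [/(uniform_site_marginal _ _ N_gt0) T_count gE]]].
  exists T; split; last by move=> y; rewrite gE symmetrize_sum.
  by apply/(uniform_site_marginal _ _ N_gt0)/sum_count_codom_inj => k; apply: bij_inj.
have x0 : X.
  case: (pickP (@predT {ffun 'I_N -> X})) => [y _ | no_config]; first exact: y (Ordinal N_gt0).
  by move: hg.2; rewrite big_pred0 // => /esym/eqP; rewrite oner_eq0.
have [|B [B_inj B_perm]] := regular_multigraph_decomposition x0 _ T_count.
  by move=> nu; rewrite size_codom card_ord.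
exists (fun k : 'I_N => B k); split=> [k | y]; first exact: injF_bij (B_inj k).
rewrite gE symmetrize_sum; apply: eq_bigr => nu _; congr (_ * _).
apply: symmetrize_dirac_perm_eq.
by rewrite (codom_ord_mkseq N (B^~ nu)); apply: B_perm.
Qed.
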